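(* Let $n\ge1$. Any two sequences $(a_i)_{i=1}^{3n},(b_i)_{i=1}^{3n}$ with entries in $\{1,2\}$ that have the same cyclic length vector are projective equivalent; i.e., every projective equivalence class of such sequences is determined by its cyclic length vector.
   Context: Sequences $(a_i),(b_i)$ of length $3n$ in $\{1,2\}$ are equivalent if $b_i=a_i$ for all $i$, or $b_i=3-a_i$ for all $i$, or $b_i=a_{3n+1-i}$ for all $i$, or $b_i=3-a_{3n+1-i}$ for all $i$. Define $\sigma_{3n}\cdot a=(a_2,\dots,a_{3n},a_1)$ if $n$ is even and $(a_2,\dots,a_{3n},3-a_1)$ if $n$ is odd. $a,b$ are projective equivalent if $b$ is equivalent to $\sigma_{3n}^k\cdot a$ for some $k\in\mathbb{N}$. The length vector of a sequence $a$ is the ordered list of lengths of its maximal blocks of consecutive equal entries (an ordered partition of $3n$). The cyclic length vector of the projective equivalence class of $a$ is the length vector of a projective equivalent sequence $a'$ with $a'_1\ne a'_{3n}$ if $n$ is even, or with $a'_1=a'_{3n}$ if $n$ is odd (and is $(3n)$ if no such $a'$ exists), regarded as an element of $\mathbb{Z}^m/\langle\sigma_m,\tau_m\rangle$, where $m$ is its number of entries, $\sigma_m$ acts by cyclic shift of entries and $\tau_m$ by reversal of the order of entries. The cyclic length vector of a sequence is that of its projective equivalence class. *)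

From mathcomp Require Import all_boot.
Set Implicit Arguments. Unset Strict Implicit. Unset Printing Implicit Defensive.

Definition seq12 (n : nat) (a : seq nat) : bool :=
  (size a == 3 * n) && all (fun x => (x == 1) || (x == 2)) a.

Definition flip (a : seq nat) : seq nat := map (fun x => 3 - x) a.

Definition seq_equiv (a b : seq nat) : Prop :=
  b = a \/ b = flip a \/ b = rev a \/ b = flip (rev a).

Definition sigma (n : nat) (a : seq nat) : seq nat :=
  match a with
  | [::] => [::]
  | x :: s => if odd n then rcons s (3 - x) else rcons s x
  end.

Definition proj_equiv (n : nat) (a b : seq nat) : Prop :=
  exists k : nat, seq_equiv (iter k (sigma n) a) b.

(* length vector: lengths of maximal blocks of consecutive equal entries *)
Fixpoint lv_aux (x c : nat) (s : seq nat) : seq nat :=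
  match s with
  | [::] => [:: c]
  | y :: s' => if y == x then lv_aux x c.+1 s' else c :: lv_aux y 1 s'
  end.

Definition length_vector (s : seq nat) : seq nat :=
  match s with
  | [::] => [::]
  | x :: s' => lv_aux x 1 s'
  end.

(* the boundary condition on a' (1-indexed a'_1 and a'_{3n}) *)
Definition cyc_cond (n : nat) (a' : seq nat) : bool :=
  if odd n then nth 0 a' 0 == nth 0 a' (3 * n).-1
  else nth 0 a' 0 != nth 0 a' (3 * n).-1.

Definition is_cyc_lv (n : nat) (a : seq nat) (v : seq nat) : Prop :=
  (exists a', proj_equiv n a a' /\ cyc_cond n a' /\ v = length_vector a')
  \/ ((~ exists a', proj_equiv n a a' /\ cyc_cond n a') /\ v = [:: 3 * n]).

Definition dihedral_eq (v w : seq nat) : Prop :=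
  exists k, w = rot k v \/ w = rot k (rev v).

Definition same_cyc_lv (n : nat) (a b : seq nat) : Prop :=
  exists va vb, is_cyc_lv n a va /\ is_cyc_lv n b vb /\ dihedral_eq va vb.

From mathcomp Require Import all_boot zify.
Set Implicit Arguments. Unset Strict Implicit. Unset Printing Implicit Defensive.

(** A word over {1,2} is determined by its first letter and its run lengths.
   Applying σ as many times as the first run is long moves that run to the
   end, its letters flipped iff n is odd.  The boundary condition defining
   the cyclic length vector says exactly that the number of runs has the
   parity of n, and then the moved run never merges with the old last run:
   σ-powers realize every cyclic rotation of the length vector, reversal
   reverses it, and a flip adjusts the first letter.  If no σ-shift meets
   the boundary condition, the word is constant and n is even.  Finally σ
   has finite order and reversal conjugates σ to its inverse, so projective
   equivalence is an equivalence relation. *)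

Definition is12 (x : nat) : bool := (x == 1) || (x == 2).

Lemma is12_sub3 x : is12 x -> is12 (3 - x).
Proof. by case/orP=> /eqP->. Qed.

Lemma sub3K x : is12 x -> 3 - (3 - x) = x.
Proof. by case/orP=> /eqP->. Qed.

(* Flips x iff k is odd: both the letter change made by [sigma k] and the
   letter of run number k of a word starting with x. *)
Definition twist (k x : nat) : nat := if odd k then 3 - x else x.

Lemma is12_twist k x : is12 x -> is12 (twist k x).
Proof. by rewrite /twist; case: odd => //; apply: is12_sub3. Qed.

Lemma twistD m k x : is12 x -> twist m (twist k x) = twist (m + k) x.
Proof. by move=> x12; rewrite /twist oddD; case: odd; case: odd; rewrite ?sub3K. Qed.

Lemma twistS k x : is12 x -> twist k (3 - x) = twist k.+1 x.
Proof. by move=> x12; rewrite -[k.+1]addn1 -twistD. Qed.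

Lemma twistK k x : is12 x -> twist k (twist k x) = x.
Proof. by move=> x12; rewrite twistD // /twist oddD addbb. Qed.

Lemma twist_eq k x : is12 x -> (twist k x == x) = ~~ odd k.
Proof. by rewrite /twist; case: odd; case/orP=> /eqP->. Qed.

Lemma sigma_cons n x s : sigma n (x :: s) = rcons s (twist n x).
Proof. by rewrite /sigma /twist; case: odd. Qed.

Lemma iter_sigma_nil n k : iter k (sigma n) [::] = [::].
Proof. by elim: k => //= k ->. Qed.

Lemma size_iter_sigma n k s : size (iter k (sigma n) s) = size s.
Proof.
elim: k => //= k <-; case: (iter k (sigma n) s) => // x t.
by rewrite sigma_cons size_rcons.
Qed.

Lemma all12_iter_sigma n k s : all is12 s -> all is12 (iter k (sigma n) s).
Proof.
move=> s12; elim: k => //= k; case: (iter k (sigma n) s) => // x t /andP[x12 t12].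
by rewrite sigma_cons all_rcons is12_twist.
Qed.

Lemma iter_sigma n i s : i <= size s ->
  iter i (sigma n) s = drop i s ++ map (twist n) (take i s).
Proof.
elim: i => [|i IH] le_i_s; first by rewrite drop0 take0 cats0.
rewrite iterS IH 1?ltnW // (drop_nth 0 le_i_s) cat_cons sigma_cons.
by rewrite (take_nth 0 le_i_s) map_rcons rcons_cat.
Qed.

Lemma head_iter_sigma n i s : i < size s -> head 0 (iter i (sigma n) s) = nth 0 s i.
Proof. by move=> lt_i_s; rewrite iter_sigma 1?ltnW // (drop_nth 0 lt_i_s). Qed.

Lemma last_iter_sigma n i s : i < size s ->
  last 0 (iter i.+1 (sigma n) s) = twist n (nth 0 s i).
Proof.
move=> lt_i_s; rewrite iterS iter_sigma 1?ltnW // (drop_nth 0 lt_i_s).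
by rewrite cat_cons sigma_cons last_rcons.
Qed.

Lemma iter_sigma_period n k s : all is12 s -> iter (2 * size s * k) (sigma n) s = s.
Proof.
move=> /allP s12.
have iter_size t : iter (size t) (sigma n) t = map (twist n) t.
  by rewrite iter_sigma // drop_size take_size.
have period : iter (2 * size s) (sigma n) s = s.
  rewrite mul2n -addnn iterD iter_size -{1}(size_map (twist n) s) iter_size -map_comp.
  by rewrite map_id_in // => x /s12 /= /twistK->.
elim: k => [|k IH]; first by rewrite muln0.
by rewrite mulnS iterD IH period.
Qed.

Lemma iter_sigma_cancel n k s : all is12 s ->
  exists j, iter j (sigma n) (iter k (sigma n) s) = s.
Proof.
case: s => [|x t] s12; first by exists 0; rewrite iter_sigma_nil.
exists (2 * size (x :: t) * k - k); rewrite -iterD subnK ?iter_sigma_period //=.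
nia.
Qed.

Lemma iter_sigma_flip n k s : iter k (sigma n) (flip s) = flip (iter k (sigma n) s).
Proof.
elim: k => //= k ->; case: (iter k _ s) => // x t.
by rewrite /flip map_cons !sigma_cons map_rcons /twist; case: odd.
Qed.

Lemma sigma_rev_sigma n s : all is12 s -> sigma n (rev (sigma n s)) = rev s.
Proof.
case: s => // x t /andP[x12 _].
by rewrite sigma_cons rev_rcons sigma_cons twistK // rev_cons.
Qed.

Lemma rev_iter_sigma n k s : all is12 s ->
  exists j, rev (iter k (sigma n) s) = iter j (sigma n) (rev s).
Proof.
move=> s12; have conj_rev : iter k (sigma n) (rev (iter k (sigma n) s)) = rev s.
  elim: k => // k IH.
  by rewrite iterSr iterS sigma_rev_sigma ?all12_iter_sigma.
have r12 : all is12 (rev (iter k (sigma n) s)) by rewrite all_rev all12_iter_sigma.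
have [j <-] := iter_sigma_cancel n k r12.
by exists j; rewrite conj_rev.
Qed.

Definition equiv_act (f r : bool) (s : seq nat) : seq nat :=
  (if f then flip else id) (if r then rev s else s).

Lemma flipK s : all is12 s -> flip (flip s) = s.
Proof. by move=> /allP s12; rewrite /flip -map_comp map_id_in // => x /s12 /= /sub3K. Qed.

Lemma all12_flip s : all is12 s -> all is12 (flip s).
Proof. by rewrite all_map => /allP s12; apply/allP => x /s12 /is12_sub3. Qed.

Lemma all12_equiv_act f r s : all is12 s -> all is12 (equiv_act f r s).
Proof. by case: f; case: r => s12 /=; rewrite ?all12_flip ?all_rev. Qed.

Lemma size_equiv_act f r s : size (equiv_act f r s) = size s.
Proof. by case: f; case: r; rewrite /= ?size_map ?size_rev. Qed.

Lemma equiv_act_comp f1 r1 f2 r2 s : all is12 s ->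
  equiv_act f2 r2 (equiv_act f1 r1 s) = equiv_act (f1 (+) f2) (r1 (+) r2) s.
Proof.
move=> s12; have rs12 : all is12 (rev s) by rewrite all_rev.
by case: f1; case: r1; case: f2; case: r2;
  rewrite /equiv_act /= ?revK /flip ?map_rev -/(flip _) ?revK ?flipK.
Qed.

Lemma equiv_actK f r s : all is12 s -> equiv_act f r (equiv_act f r s) = s.
Proof. by move=> s12; rewrite equiv_act_comp // !addbb. Qed.

Lemma iter_sigma_equiv_act n k f r s : all is12 s ->
  exists j, iter k (sigma n) (equiv_act f r s) = equiv_act f r (iter j (sigma n) s).
Proof.
move=> s12; case: r; last by exists k; case: f; rewrite /= ?iter_sigma_flip.
have [j rev_iter] : exists j, rev (iter k (sigma n) (rev s)) = iter j (sigma n) s.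
  by rewrite -{2}(revK s); apply: rev_iter_sigma; rewrite all_rev.
by exists j; case: f; rewrite /= ?iter_sigma_flip -rev_iter revK.
Qed.

Lemma proj_equivP n a b :
  proj_equiv n a b <-> exists k f r, b = equiv_act f r (iter k (sigma n) a).
Proof.
split=> [[k eqv]|[k [f [r ->]]]]; exists k.
  by case: eqv => [->|[->|[->|->]]];
    [exists false, false | exists true, false | exists false, true | exists true, true].
by case: f; case: r; rewrite /seq_equiv /=; tauto.
Qed.

Lemma seq12_proj_equiv n a b : seq12 n a -> proj_equiv n a b -> seq12 n b.
Proof.
move=> /andP[sz a12] /proj_equivP[k [f [r ->]]].
by rewrite /seq12 size_equiv_act size_iter_sigma sz all12_equiv_act ?all12_iter_sigma.
Qed.

Lemma proj_equiv_trans n a b c : all is12 a ->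
  proj_equiv n a b -> proj_equiv n b c -> proj_equiv n a c.
Proof.
move=> a12 /proj_equivP[k1 [f1 [r1 ->]]] /proj_equivP[k2 [f2 [r2 ->]]].
have ka12 := all12_iter_sigma n k1 a12.
have [j ->] := iter_sigma_equiv_act n k2 f1 r1 ka12.
apply/proj_equivP; exists (j + k1), (f1 (+) f2), (r1 (+) r2).
by rewrite equiv_act_comp ?all12_iter_sigma // iterD.
Qed.

Lemma proj_equiv_sym n a b : all is12 a -> proj_equiv n a b -> proj_equiv n b a.
Proof.
move=> a12 /proj_equivP[k [f [r eb]]].
have ka12 := all12_iter_sigma n k a12.
have [i cancel_k] := iter_sigma_cancel n k a12.
have [j shift_b] := iter_sigma_equiv_act n i f r (all12_equiv_act f r ka12).
apply/proj_equivP; exists j, f, r.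
by rewrite -{1}cancel_k -(equiv_actK f r ka12) shift_b eb.
Qed.

Fixpoint of_runs (x : nat) (v : seq nat) : seq nat :=
  if v is c :: v' then nseq c x ++ of_runs (3 - x) v' else [::].

Lemma all12_of_runs x v : is12 x -> all is12 (of_runs x v).
Proof.
elim: v x => //= c v IH x x12.
by rewrite all_cat all_nseq x12 orbT IH ?is12_sub3.
Qed.

Lemma flip_of_runs x v : is12 x -> flip (of_runs x v) = of_runs (3 - x) v.
Proof.
elim: v x => //= c v IH x x12.
by rewrite /flip map_cat map_nseq -/(flip _) IH ?is12_sub3 ?sub3K.
Qed.

Lemma of_runs_rcons x v c : is12 x ->
  of_runs x (rcons v c) = of_runs x v ++ nseq c (twist (size v) x).
Proof.
elim: v x => [|d v IH] x x12 /=; first by rewrite cats0.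
by rewrite IH ?is12_sub3 // catA twistS.
Qed.

Lemma rev_of_runs x v : is12 x ->
  rev (of_runs x v) = of_runs (twist (size v).-1 x) (rev v).
Proof.
elim: v x => //= c v IH x x12.
rewrite rev_cat IH ?is12_sub3 // rev_nseq rev_cons of_runs_rcons ?is12_twist //.
rewrite size_rev twistK //; case: v {IH} => [|d v] //=.
by rewrite twistS.
Qed.

Lemma last_of_runs x v : is12 x -> all (leq 1) v -> v != [::] ->
  last 0 (of_runs x v) = twist (size v).-1 x.
Proof.
move=> x12; case/lastP: v => [|v c] // /[swap] _.
rewrite all_rcons size_rcons of_runs_rcons // last_cat => /andP[].
by case: c => // c _ _; rewrite -addn1 nseqD last_cat.
Qed.

Lemma of_runs_lv_aux x c s : all is12 (x :: s) ->
  of_runs x (lv_aux x c s) = nseq c x ++ s.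
Proof.
elim: s x c => [|y s IH] x c /=; first by rewrite !cats0.
case/and3P=> x12 y12 s12; case: eqP => [->|neq_yx].
  by rewrite IH /= ?x12 //; elim: c => //= c ->.
have -> : y = 3 - x by move: x12 y12 neq_yx; do 2 case/orP=> /eqP->.
by rewrite /= IH //= is12_sub3.
Qed.

Lemma of_runs_length_vector x s : all is12 (x :: s) ->
  of_runs x (length_vector (x :: s)) = x :: s.
Proof. exact: of_runs_lv_aux. Qed.

Lemma length_vector_gt0 s : all (leq 1) (length_vector s).
Proof.
case: s => //= x s.
suff lv_aux_gt0 c : 0 < c -> all (leq 1) (lv_aux x c s) by apply: lv_aux_gt0.
elim: s x c => [|y s IH] x c c_gt0 /=; first by rewrite c_gt0.
by case: eqP => _; rewrite /= ?c_gt0 IH.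
Qed.

Lemma length_vector_cons_nonnil x s : length_vector (x :: s) != [::].
Proof.
suff lv_aux_nil c : lv_aux x c s != [::] by apply: lv_aux_nil.
by elim: s x c => //= y s IH x c; case: (y == x).
Qed.

Lemma iter_sigma_of_runs n x c v : is12 x -> odd (size v).+1 = odd n ->
  iter c (sigma n) (of_runs x (c :: v)) = of_runs (3 - x) (rcons v c).
Proof.
move=> x12 parity_v; rewrite iter_sigma /=; last by rewrite size_cat size_nseq leq_addr.
rewrite drop_size_cat ?size_nseq // take_size_cat ?size_nseq // map_nseq.
by rewrite of_runs_rcons ?is12_sub3 // twistS // /twist parity_v.
Qed.

Lemma iter_sigma_of_runs_rot n x v k : is12 x -> odd (size v) = odd n ->
  exists j y, is12 y /\ iter j (sigma n) (of_runs x v) = of_runs y (rot k v).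
Proof.
move=> x12 parity_v; case: (leqP (size v) k) => [large_k|].
  by exists 0, x; rewrite rot_oversize.
elim: k => [|k IH] lt_k_v; first by exists 0, x; rewrite rot0.
have [j [y [y12 shift_j]]] := IH (ltnW lt_k_v).
rewrite rotS 1?ltnW //; have := size_rot k v.
case: (rot k v) shift_j => [|c w] shift_j size_w; first by rewrite -size_w in lt_k_v.
exists (c + j), (3 - y); split; first exact: is12_sub3.
by rewrite iterD shift_j rot1_cons iter_sigma_of_runs // -parity_v -size_w.
Qed.

Lemma proj_equiv_of_runs_rot n x y v k : is12 x -> is12 y -> odd (size v) = odd n ->
  proj_equiv n (of_runs x v) (of_runs y (rot k v)).
Proof.
move=> x12 y12 parity_v.
have [j [y' [y'12 shift_j]]] := iter_sigma_of_runs_rot k x12 parity_v.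
apply/proj_equivP; exists j, (y != y'), false; rewrite shift_j.
case: eqP => [-> //|neq_yy'] /=; rewrite flip_of_runs //.
by move: y12 y'12 neq_yy'; do 2 case/orP=> /eqP->.
Qed.

Lemma proj_equiv_of_runs n x y v w : is12 x -> is12 y -> odd (size v) = odd n ->
  dihedral_eq v w -> proj_equiv n (of_runs x v) (of_runs y w).
Proof.
move=> x12 y12 parity_v [k [->|->]]; first exact: proj_equiv_of_runs_rot.
apply: (proj_equiv_trans (b := rev (of_runs x v))); first exact: all12_of_runs.
  by exists 0; right; right; left.
rewrite rev_of_runs //; apply: proj_equiv_of_runs_rot; rewrite ?size_rev //.
exact: is12_twist.
Qed.

Lemma cyc_condE n s : size s = 3 * n -> all is12 s ->
  cyc_cond n s = (head 0 s != twist n (last 0 s)).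
Proof.
rewrite /cyc_cond => <-; rewrite nth0 nth_last /twist.
case: s => [|x s] s12 /=; first by case: odd.
have /andP[x12 _] := s12; have /(allP s12) l12 := mem_last x s.
by case: odd; move: x12 l12; do 2 case/orP=> /eqP->.
Qed.

Lemma odd_size_length_vector n a : seq12 n a -> cyc_cond n a ->
  odd (size (length_vector a)) = odd n.
Proof.
move=> /andP[/eqP sz a12]; rewrite cyc_condE //.
case: a sz a12 => [|x s] sz a12; first by have -> : n = 0 by rewrite /= in sz; lia.
have x12 : is12 x by case/andP: a12.
have lv_gt0 : 0 < size (length_vector (x :: s)).
  by rewrite lt0n size_eq0 length_vector_cons_nonnil.
have -> : last 0 (x :: s) = twist (size (length_vector (x :: s))).-1 x.
  by rewrite -{1}(of_runs_length_vector a12) last_of_runs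
    ?length_vector_gt0 ?length_vector_cons_nonnil.
rewrite /= twistD // eq_sym twist_eq // negbK.
by move: lv_gt0; case: (size _) => // m _; rewrite oddD /=; case: odd; case: odd.
Qed.

Lemma proj_equiv_same_length_vector n a b : seq12 n a -> seq12 n b -> cyc_cond n a ->
  dihedral_eq (length_vector a) (length_vector b) -> proj_equiv n a b.
Proof.
move=> a_seq /andP[/eqP szb b12] ca D.
have parity := odd_size_length_vector a_seq ca.
case/andP: a_seq => /eqP sza a12.
case: a sza a12 ca parity D => [|x s] sza a12 ca parity D.
  have n0 : n = 0 by rewrite /= in sza; lia.
  by move: ca; rewrite n0.
case: b szb b12 D => [|y t] szb b12 D; first by rewrite /= in sza szb; lia.
rewrite -(of_runs_length_vector a12) -(of_runs_length_vector b12).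
by apply: proj_equiv_of_runs => //; [case/andP: a12 | case/andP: b12].
Qed.

Lemma no_cyc_shift_const n s : size s = 3 * n -> all is12 s ->
  (forall j, ~~ cyc_cond n (iter j (sigma n) s)) ->
  forall i, i < size s -> nth 0 s i = head 0 s.
Proof.
move=> sz s12 no_cyc; elim=> [//|i IH] lt_i_s.
have i12 : is12 (nth 0 s i) by rewrite (allP s12) ?mem_nth 1?ltnW.
have := no_cyc i.+1; rewrite cyc_condE ?size_iter_sigma ?all12_iter_sigma //.
rewrite head_iter_sigma // last_iter_sigma 1?ltnW // negbK twistK //.
by move=> /eqP->; rewrite IH 1?ltnW.
Qed.

Lemma no_cyc_rep_const n a : 0 < n -> seq12 n a ->
  ~ (exists a', proj_equiv n a a' /\ cyc_cond n a') ->
  ~~ odd n /\ exists2 x, is12 x & a = nseq (3 * n) x.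
Proof.
move=> n_gt0 /andP[/eqP sz a12] no_rep.
have no_cyc j : ~~ cyc_cond n (iter j (sigma n) a).
  apply/negP => cyc_j; apply: no_rep; exists (iter j (sigma n) a); split=> //.
  by exists j; left.
have const := no_cyc_shift_const sz a12 no_cyc.
have a_gt0 : 0 < size a by rewrite sz muln_gt0.
have h12 : is12 (head 0 a) by rewrite -nth0; apply: (allP a12); rewrite mem_nth.
split; last first.
  exists (head 0 a) => //; apply: (eq_from_nth (x0 := 0)) => [|i lt_i_a].
    by rewrite size_nseq.
  by rewrite nth_nseq -sz lt_i_a const.
apply: contraNN (no_cyc 0) => odd_n.
rewrite cyc_condE //= -nth_last const ?ltn_predL // /twist odd_n.
by case/orP: h12 => /eqP->.
Qed.

Lemma proj_equiv_nseq n m x y : is12 x -> is12 y ->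
  proj_equiv n (nseq m x) (nseq m y).
Proof.
move=> x12 y12; apply/proj_equivP; exists 0, (x != y), false.
case: eqP => [-> //|neq_xy]; rewrite /= /flip map_nseq.
by move: x12 y12 neq_xy; do 2 case/orP=> /eqP->.
Qed.

Lemma dihedral_eq_size v w : dihedral_eq v w -> size w = size v.
Proof. by case=> k [->|->]; rewrite size_rot ?size_rev. Qed.

Theorem mainTheorem4 (n : nat) (a b : seq nat) :
  1 <= n -> seq12 n a -> seq12 n b -> same_cyc_lv n a b -> proj_equiv n a b.
Proof.
move=> n_gt0 a_seq b_seq [va [vb [cyc_a [cyc_b D]]]].
case: cyc_a D => [[a' [aa' [ca ->]]]|[no_a ->]];
  case: cyc_b => [[b' [bb' [cb ->]]]|[no_b ->]] D.
- have a'_seq := seq12_proj_equiv a_seq aa'; have b'_seq := seq12_proj_equiv b_seq bb'.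
  have /andP[_ a12] := a_seq; have /andP[_ b12] := b_seq; have /andP[_ a'12] := a'_seq.
  apply: (proj_equiv_trans a12 aa').
  apply: (proj_equiv_trans a'12 _ (proj_equiv_sym b12 bb')).
  exact: proj_equiv_same_length_vector ca D.
- have [even_n _] := no_cyc_rep_const n_gt0 b_seq no_b.
  have := odd_size_length_vector (seq12_proj_equiv a_seq aa') ca.
  by rewrite -(dihedral_eq_size D) (negbTE even_n).
- have [even_n _] := no_cyc_rep_const n_gt0 a_seq no_a.
  have := odd_size_length_vector (seq12_proj_equiv b_seq bb') cb.
  by rewrite (dihedral_eq_size D) (negbTE even_n).
- have [_ [x x12 ->]] := no_cyc_rep_const n_gt0 a_seq no_a.
  have [_ [y y12 ->]] := no_cyc_rep_const n_gt0 b_seq no_b.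
  exact: proj_equiv_nseq.
Qed.
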